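(* Let $n$ be an odd natural number with $n\neq 2^k-1$ for all $k$. Then there exist positive integers $a,b$ such that $a$ and $b$ are odd, $2a+3b=n$, and $$\frac{n\,(a+b-1)!}{a!\,b!}\equiv 1\pmod 2.$$ *)

From mathcomp Require Import all_boot.

From mathcomp Require Import all_boot.
From mathcomp Require Import zify ring.

(* Write n + 1 = 2^j q with q odd: j >= 1 as n is odd, and q >= 3 as n is not
   2^k - 1.  Take b = 2^j - 1 and a = 2^j (q - 3)/2 + 1, both odd, so that
   2a + 3b = n.  Since a! b! C(a+b, a) = (a+b)! and a! b! C(a+b-1, a) = b (a+b-1)!,
   the quotient is 2 C(a+b, a) + C(a+b-1, b-1), whose parity is that of
   C(2^j s - 1, k) with k < 2^j.  By Lucas's theorem for p = 2 this is odd: the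
   last j binary digits of 2^j s - 1 are all 1. *)


Lemma odd_binS_of_double_row N n :
    (forall m, odd 'C(N, m) = ~~ odd m && odd 'C(n, m./2)) ->
  forall m, odd 'C(N.+1, m) = odd 'C(n, m./2).
Proof.
move=> rowN [|m]; first by rewrite !bin0.
rewrite binS oddD !rowN /= uphalf_half.
by case: (odd m); rewrite ?add0n ?addbF.
Qed.

Lemma odd_bin_double n m : odd 'C(n.*2, m) = ~~ odd m && odd 'C(n, m./2).
Proof.
elim: n m => [|n IHn] m.
  by case: m => [|[|m]] //=; rewrite andbF.
case: m => [|m]; first by rewrite !bin0.
have rowS := odd_binS_of_double_row _ _ IHn.
rewrite doubleS binS oddD !rowS /= uphalf_half.
by case: (odd m); rewrite ?addbb // add1n binS oddD.
Qed.

Lemma odd_bin_doubleS n m : odd 'C(n.*2.+1, m) = odd 'C(n, m./2).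
Proof. exact: odd_binS_of_double_row _ _ (odd_bin_double n) m. Qed.

Lemma odd_bin_pred_pow2 j s k : 0 < s -> k < 2 ^ j -> odd 'C((2 ^ j * s).-1, k).
Proof.
move=> s_gt0; elim: j k => [|j IHj] k; first by case: k => [|k]; rewrite ?bin0 // expn0.
move=> k_lt; have pos : 0 < 2 ^ j * s by rewrite muln_gt0 expn_gt0.
have -> : (2 ^ j.+1 * s).-1 = ((2 ^ j * s).-1).*2.+1.
  by rewrite expnS -mulnA mul2n; case: (2 ^ j * s) pos.
by rewrite odd_bin_doubleS IHj // ltn_half_double -mul2n -expnS.
Qed.

Lemma mul_fact_binE a c :
  (2 * a + 3 * c.+1) * (a + c)`! = a`! * c.+1`! * ('C(a + c.+1, a).*2 + 'C(a + c, a)).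
Proof.
have facD := bin_fact (leq_addr c a); rewrite addKn in facD.
have facDS := bin_fact (leq_addr c.+1 a); rewrite addKn in facDS.
rewrite -mul2n mulnDr.
have -> : a`! * c.+1`! * (2 * 'C(a + c.+1, a)) = 2 * (a + c.+1)`! by rewrite -facDS; ring.
have -> : a`! * c.+1`! * 'C(a + c, a) = c.+1 * (a + c)`! by rewrite -facD factS; ring.
by rewrite addnS factS; ring.
Qed.

Lemma dvdn_fact_quotient a c : a`! * c.+1`! %| (2 * a + 3 * c.+1) * (a + c)`!.
Proof. by rewrite mul_fact_binE dvdn_mulr. Qed.

Lemma odd_fact_quotient a c :
  odd ((2 * a + 3 * c.+1) * (a + c)`! %/ (a`! * c.+1`!)) = odd 'C(a + c, c).
Proof.
rewrite mul_fact_binE mulKn ?muln_gt0 ?fact_gt0 // oddD odd_double /=.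
by rewrite -bin_sub ?leq_addr // addKn.
Qed.

Theorem lemma6p5 (n : nat) (hn : odd n) (hk : forall k : nat, n <> 2 ^ k - 1) :
  exists a b : nat,
    0 < a /\ 0 < b /\ odd a /\ odd b /\ 2 * a + 3 * b = n /\
    (a`! * b`!) %| n * (a + b - 1)`! /\
    odd (n * (a + b - 1)`! %/ (a`! * b`!)).
Proof.
set j := logn 2 n.+1; set q := n.+1`_2^'.
have nE : 2 ^ j * q = n.+1 by rewrite -p_part partnC.
have q_odd : odd q by rewrite odd_2'nat part_pnat.
have [p pE] : exists p, 2 ^ j = p.*2.+2.
  case: j nE => [|i] nE; first by move: q_odd; rewrite -(mul1n q) nE /= hn.
  by exists (2 ^ i).-1; rewrite expnS mul2n; case: (2 ^ i) (expn_gt0 2 i).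
have [t qE] : exists t, q = t.*2.+3.
  have qE := odd_double_half q; rewrite q_odd in qE.
  case: (q./2) qE => [|t] qE; last by exists t; rewrite -qE doubleS.
  by case: (hk j); rewrite -qE muln1 in nE; rewrite nE subn1.
set a := (p.*2.+2 * t).+1.
have abE : 2 * a + 3 * p.*2.+1 = n by move: nE; rewrite pE qE /a; lia.
exists a, p.*2.+1; rewrite -abE addnS subn1 /=.
split=> //; split=> //; split; first by rewrite /a /= oddM /= odd_double.
split; first by rewrite /= odd_double.
split=> //; split; first exact: dvdn_fact_quotient.
rewrite odd_fact_quotient (_ : a + p.*2 = (2 ^ j * t.+1).-1); last by rewrite pE /a; lia.
by rewrite odd_bin_pred_pow2 // pE.
Qed.
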